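(* Let $\mathbf M$ be the Wright–Fisher matrix and $\phi(x)=x\log x$ (with $\phi(0)=0$). For every $\mathbf p\in\Delta^N$ with $\langle\mathbf u^{(1)},\mathbf p\rangle>0$, one has $E(\mathbf M\mathbf p)\le E(\mathbf p)$; consequently $n\mapsto E(\mathbf M^n\mathbf p)$ is non-increasing.
   Context: Fix $N\ge2$ and $(\mathsf s_0,\dots,\mathsf s_N)$ with $\mathsf s_0=0$, $\mathsf s_N=1$ and $0<\mathsf s_j<1$ for $1\le j\le N-1$. The Wright–Fisher matrix is $\mathbf M=(M_{ij})_{i,j=0}^N$ with $M_{ij}=\binom Ni\mathsf s_j^{\,i}(1-\mathsf s_j)^{N-i}$ (column-stochastic; probability vectors evolve by $\mathbf p\mapsto\mathbf M\mathbf p$). Its core $(M_{ij})_{i,j=1}^{N-1}$ is a positive matrix; let $\mu_1>0$ be its Perron eigenvalue and $\mathbf u^{(1)}=(u^{(1)}_i)_{i=1}^{N-1}$, $\mathbf v^{(1)}=(v^{(1)}_i)_{i=1}^{N-1}$ its positive left and right Perron eigenvectors, normalized by $\sum_iv^{(1)}_i=1$, $\sum_iu^{(1)}_iv^{(1)}_i=1$. Let $\Delta^N=\{\mathbf x\in\mathbb R^{N+1}:x_i\ge0,\sum_ix_i=1\}$, $\langle\mathbf u^{(1)},\mathbf p\rangle=\sum_{i=1}^{N-1}u^{(1)}_ip_i$, and for $\langle\mathbf u^{(1)},\mathbf p\rangle>0$, $E(\mathbf p)=\sum_{i=1}^{N-1}\phi\!\left(\frac{p_i}{v^{(1)}_i\langle\mathbf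 u^{(1)},\mathbf p\rangle}\right)v^{(1)}_iu^{(1)}_i$. *)

From HB Require Import structures.
From mathcomp Require Import all_boot all_order all_algebra.
From mathcomp Require Import all_classical all_reals all_analysis.
Set Implicit Arguments. Unset Strict Implicit. Unset Printing Implicit Defensive.
Import Order.TTheory GRing.Theory Num.Theory.
Local Open Scope ring_scope.

Definition core_idx (N : nat) (i : 'I_N.+1) : bool := (0 < i)%N && (i < N)%N.

Definition WF_matrix {R : realType} (N : nat) (s : 'I_N.+1 -> R) : 'M[R]_N.+1 :=
  \matrix_(i, j) ('C(N, i)%:R * s j ^+ i * (1 - s j) ^+ (N - i)).

Definition phi {R : realType} (x : R) : R := if x == 0 then 0 else x * ln x.

(* Perron data of the core (M_ij)_{i,j=1}^{N-1}: mu > 0, u, v positive left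
   and right eigenvectors for mu, normalized by sum v = 1, sum u v = 1.
   (Entries of u, v at indices 0 and N are irrelevant.) *)
Definition perron_data {R : realType} (N : nat) (M : 'M[R]_N.+1)
  (mu : R) (u v : 'I_N.+1 -> R) : Prop :=
  0 < mu /\
      (forall i, core_idx i -> 0 < u i /\ 0 < v i) /\
      (forall j, core_idx j ->
         \sum_(i < N.+1 | core_idx i) u i * M i j = mu * u j) /\
      (forall i, core_idx i ->
         \sum_(j < N.+1 | core_idx j) M i j * v j = mu * v i) /\
      \sum_(i < N.+1 | core_idx i) v i = 1 /\
      \sum_(i < N.+1 | core_idx i) u i * v i = 1.

Definition in_simplex {R : realType} (N : nat) (p : 'cV[R]_N.+1) : Prop :=
  (forall i, 0 <= p i 0) /\ \sum_i p i 0 = 1.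

Definition upair {R : realType} (N : nat) (u : 'I_N.+1 -> R) (p : 'cV[R]_N.+1) : R :=
  \sum_(i < N.+1 | core_idx i) u i * p i 0.

Definition Efun {R : realType} (N : nat) (u v : 'I_N.+1 -> R) (p : 'cV[R]_N.+1) : R :=
  \sum_(i < N.+1 | core_idx i)
     phi (p i 0 / (v i * upair u p)) * v i * u i.

From HB Require Import structures.
From mathcomp Require Import all_boot all_order all_algebra.
From mathcomp Require Import all_classical all_reals all_analysis.
From mathcomp Require Import ring lra zify.
Set Implicit Arguments. Unset Strict Implicit. Unset Printing Implicit Defensive.
Import Order.TTheory GRing.Theory Num.Theory.
Local Open Scope ring_scope.

(* Write x_j = p_j / (v_j <u,p>), so that E(p) = sum_j phi(x_j) u_j v_j.  Since
   the boundary columns of M vanish on the core rows, <u, Mp> = mu <u,p>, and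
   the new densities are x'_i = sum_j K_ij x_j with K_ij = M_ij v_j / (mu v_i),
   the Doob transform of M by v, which is stochastic on the core.  Jensen's
   inequality for the convex phi gives phi(x'_i) <= sum_j K_ij phi(x_j), and
   summing against u_i v_i returns E(p) because u_i v_i K_ij summed over i is
   u_j v_j. *)

Lemma ln_le_subr1 {R : realType} {t : R} : 0 < t -> ln t <= t - 1.
Proof. by move=> t0; have := expR_ge1Dx (ln t); rewrite lnK ?posrE //; lra. Qed.

Lemma phi_ge_tangent (R : realType) (m y : R) : 0 < m -> 0 <= y ->
  y * (ln m + 1) - m <= phi y.
Proof.
move=> m0 y0; rewrite /phi; have [->|yn0] := eqVneq y 0; first by lra.
have yp : 0 < y by rewrite lt_neqAle eq_sym yn0.
have := ln_le_subr1 (divr_gt0 m0 yp); rewrite ln_div ?posrE // => lnmy.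
have : y * (ln m - ln y) <= y * (m / y - 1) by rewrite ler_pM2l.
by rewrite !mulrBr mulr1 mulrCA divff // mulr1; lra.
Qed.

Lemma phi_convex_comb (R : realType) (I : finType) (P : pred I) (w x : I -> R) :
  (forall j, P j -> 0 <= w j) -> (forall j, P j -> 0 <= x j) ->
  \sum_(j | P j) w j = 1 ->
  phi (\sum_(j | P j) w j * x j) <= \sum_(j | P j) w j * phi (x j).
Proof.
move=> w0 x0 w1; set m := \sum_(j | P j) w j * x j.
have wx0 j : P j -> 0 <= w j * x j by move=> Pj; rewrite mulr_ge0 ?w0 ?x0.
have m0 : 0 <= m by exact: sumr_ge0.
have [mz|mn0] := eqVneq m 0.
  rewrite mz /phi eqxx; apply: sumr_ge0 => j Pj.
  have /eqP := psumr_eq0P wx0 mz Pj.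
  by rewrite mulf_eq0 => /orP[/eqP->|/eqP->]; rewrite ?mul0r // eqxx mulr0.
have mp : 0 < m by rewrite lt_neqAle eq_sym mn0.
apply: (@le_trans _ _ (\sum_(j | P j) w j * (x j * (ln m + 1) - m))).
  rewrite /phi (negbTE mn0) (eq_bigr (fun j => w j * x j * (ln m + 1) - w j * m)).
    by rewrite sumrB -!mulr_suml w1 -/m; lra.
  by move=> j _; rewrite mulrBr mulrA.
by apply: ler_sum => j Pj; rewrite ler_wpM2l ?w0 ?phi_ge_tangent ?x0.
Qed.

Section CoreClosedMatrix.
Variables (R : realType) (N : nat) (M : 'M[R]_N.+1) (mu : R) (u v : 'I_N.+1 -> R).
Hypotheses (M_ge0 : forall i j, 0 <= M i j)
  (M_core : forall i j, core_idx i -> ~~ core_idx j -> M i j = 0)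
  (PD : perron_data M mu u v).

Lemma mulmx_core (q : 'cV[R]_N.+1) i : core_idx i ->
  (M *m q) i 0 = \sum_(j < N.+1 | core_idx j) M i j * q j 0.
Proof.
move=> ci; rewrite mxE [RHS]big_mkcond; apply: eq_bigr => j _.
by case: ifPn => // cj; rewrite M_core // mul0r.
Qed.

Lemma upair_mulmx (q : 'cV[R]_N.+1) : upair u (M *m q) = mu * upair u q.
Proof.
have [_ [_ [u_left _]]] := PD.
rewrite /upair (eq_bigr (fun i => \sum_(j < N.+1 | core_idx j) u i * M i j * q j 0)).
  rewrite exchange_big mulr_sumr; apply: eq_bigr => j cj.
  by rewrite -mulr_suml u_left // mulrA.
by move=> i ci; rewrite mulmx_core // mulr_sumr; apply: eq_bigr => j _; rewrite mulrA.
Qed.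

Lemma Efun_mulmx_le (q : 'cV[R]_N.+1) :
  (forall j, core_idx j -> 0 <= q j 0) -> 0 < upair u q ->
  Efun u v (M *m q) <= Efun u v q.
Proof.
move=> q0 uq0; have [mu0 [uv0 [u_left [v_right _]]]] := PD.
set a := upair u q.
set x := fun j => q j 0 / (v j * a).
set K := fun i j => M i j * v j / (mu * v i).
have vP j : core_idx j -> 0 < v j by move=> /uv0[].
have uP j : core_idx j -> 0 < u j by move=> /uv0[].
have K_ge0 i j : core_idx i -> core_idx j -> 0 <= K i j.
  by move=> /vP vi /vP vj; rewrite divr_ge0 ?mulr_ge0 ?M_ge0 ?ltW ?mulr_gt0.
have K_sum1 i : core_idx i -> \sum_(j < N.+1 | core_idx j) K i j = 1.
  by move=> /[dup] ci /vP vi; rewrite -mulr_suml v_right // divff ?mulf_neq0 ?gt_eqF.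
have x_next i : core_idx i ->
    (M *m q) i 0 / (v i * upair u (M *m q)) = \sum_(j < N.+1 | core_idx j) K i j * x j.
  move=> /[dup] ci /vP vi; rewrite upair_mulmx -/a mulmx_core // mulr_suml.
  by apply: eq_bigr => j /vP vj; rewrite /K /x; field; rewrite !gt_eqF.
have phi_next i : core_idx i ->
    phi ((M *m q) i 0 / (v i * upair u (M *m q))) <=
    \sum_(j < N.+1 | core_idx j) K i j * phi (x j).
  move=> ci; rewrite x_next //; apply: phi_convex_comb; last exact: K_sum1.
    by move=> j; exact: K_ge0.
  by move=> j /[dup] cj /vP vj; rewrite divr_ge0 ?q0 ?mulr_ge0 ?ltW.
apply: (@le_trans _ _ (\sum_(i < N.+1 | core_idx i)
    (\sum_(j < N.+1 | core_idx j) K i j * phi (x j)) * v i * u i)).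
  apply: ler_sum => i ci.
  by rewrite ler_wpM2r ?ler_wpM2r ?phi_next ?ltW ?uP ?vP.
rewrite le_eqVlt; apply/orP; left; apply/eqP.
rewrite (eq_bigr (fun i => \sum_(j < N.+1 | core_idx j)
    u i * M i j * (phi (x j) * v j / mu))); last first.
  move=> i /[dup] ci /vP vi; rewrite !mulr_suml; apply: eq_bigr => j _.
  by rewrite /K; field; rewrite !gt_eqF.
rewrite exchange_big; apply: eq_bigr => j cj.
by rewrite -mulr_suml u_left //; field; rewrite gt_eqF.
Qed.

Lemma Efun_expmx_nonincreasing (p : 'cV[R]_N.+1) :
  (forall i, 0 <= p i 0) -> 0 < upair u p ->
  forall n, Efun u v (M ^+ n.+1 *m p) <= Efun u v (M ^+ n *m p).
Proof.
move=> p0 up n.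
have expS k : M ^+ k.+1 *m p = M *m (M ^+ k *m p).
  by rewrite exprS -mulmxE mulmxA.
have orbit_ge0 k i : 0 <= (M ^+ k *m p) i 0.
  elim: k i => [|k IH] i; first by rewrite expr0 mul1mx.
  by rewrite expS mxE; apply: sumr_ge0 => j _; rewrite mulr_ge0.
have orbit_upair k : 0 < upair u (M ^+ k *m p).
  have [mu0 _] := PD.
  by elim: k => [|k IH]; rewrite ?expr0 ?mul1mx // expS upair_mulmx mulr_gt0.
by rewrite expS Efun_mulmx_le.
Qed.

End CoreClosedMatrix.

Section WrightFisher.
Variables (R : realType) (N : nat) (s : 'I_N.+1 -> R).
Hypotheses (s0 : s ord0 = 0) (sN : s ord_max = 1)
  (s_core : forall j, core_idx j -> 0 < s j < 1).

Lemma core_idxPn (j : 'I_N.+1) : ~~ core_idx j -> j = ord0 \/ j = ord_max.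
Proof.
rewrite /core_idx negb_and -!leqNgt => /orP[j0|jN]; [left|right]; apply: val_inj.
  by apply/eqP; rewrite -leqn0.
by have := ltn_ord j; rewrite /=; lia.
Qed.

Lemma WF_ge0 i j : 0 <= WF_matrix s i j.
Proof.
have /andP[sj0 sj1] : 0 <= s j <= 1.
  have [/s_core/andP[? ?]|/core_idxPn[->|->]] := boolP (core_idx j).
  - by rewrite !ltW.
  - by rewrite s0 lexx ler01.
  - by rewrite sN lexx ler01.
by rewrite mxE !mulr_ge0 ?exprn_ge0 ?subr_ge0.
Qed.

(* Columns are source states, so this says that the boundary states 0 and N are absorbing. *)
Lemma WF_core_boundary i j : core_idx i -> ~~ core_idx j -> WF_matrix s i j = 0.
Proof.
move=> /andP[i0 iN] /core_idxPn[->|->]; rewrite mxE ?s0 ?sN ?subrr.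
  by rewrite expr0n gtn_eqF // mulr0 mul0r.
by rewrite expr0n subn_eq0 leqNgt iN mulr0.
Qed.

End WrightFisher.

Theorem mainTheorem10 (R : realType) (N : nat) (s : 'I_N.+1 -> R)
  (mu : R) (u v : 'I_N.+1 -> R) (p : 'cV[R]_N.+1) :
  (2 <= N)%N ->
  s ord0 = 0 -> s ord_max = 1 ->
  (forall j, core_idx j -> 0 < s j < 1) ->
  perron_data (WF_matrix s) mu u v ->
  in_simplex p ->
  0 < upair u p ->
  Efun u v (WF_matrix s *m p) <= Efun u v p /\
  (forall n : nat,
     Efun u v (WF_matrix s ^+ n.+1 *m p) <= Efun u v (WF_matrix s ^+ n *m p)).
Proof.
move=> _ s0 sN s_core PD [p0 _] up.
have decr := Efun_expmx_nonincreasing (WF_ge0 s0 sN s_core)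
  (WF_core_boundary s0 sN) PD p0 up.
by split=> //; have := decr 0%N; rewrite expr1 expr0 mul1mx.
Qed.
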